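(* Let $\eta\in(0,1)$ and $\mathcal N_S>0$. For $N_S>0$ and $\xi\in[0,1]$ let $$I(\xi;N_S)=4N_S\left\{\frac{1-\xi}{1-2\eta^2\left(\sqrt{\xi N_S(1+\xi N_S)}-\xi N_S\right)}+\frac{\xi\left[(1-\eta^2)^2+\eta^4\right]}{(1-\eta^2)\left(1+2\xi N_S\eta^2(1-\eta^2)\right)}\right\},$$ and for real $M\ge1$ define the total quantum Fisher information $\mathcal I(M)=\max_{\xi\in[0,1]}M\,I(\xi;\mathcal N_S/M)$. Then the optimal number of probes is either $M=1$ or $M=\infty$, i.e. $\sup_{M\ge1}\mathcal I(M)=\max\{\mathcal I(1),\lim_{M\to\infty}\mathcal I(M)\}$.
   Context: $I(\xi;N_S)$ is the quantum Fisher information for estimating the transmission $\eta$ of a pure-loss (zero-temperature) bosonic channel with one single-mode pure displaced squeezed probe of mean photon number $N_S$, a fraction $\xi$ in squeezing and $1-\xi$ in displacement. Using $M$ independent probes with a total photon budget $\mathcal N_S=MN_S$ gives total quantum Fisher information $M\,I(\xi;\mathcal N_S/M)$; the number of probes is relaxed to a continuous variable $M\ge1$, with $M=\infty$ understood as the limit. *)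

From HB Require Import structures.
From mathcomp Require Import all_boot all_order all_algebra.
From mathcomp Require Import all_classical all_reals all_analysis.
Set Implicit Arguments. Unset Strict Implicit. Unset Printing Implicit Defensive.
Import Order.TTheory GRing.Theory Num.Theory.
Import numFieldNormedType.Exports.
Local Open Scope classical_set_scope.
Local Open Scope ring_scope.

Definition QFI {R : realType} (eta NS xi : R) : R :=
  4 * NS * ((1 - xi) / (1 - 2 * eta ^+ 2 * (Num.sqrt (xi * NS * (1 + xi * NS)) - xi * NS))
   + xi * ((1 - eta ^+ 2) ^+ 2 + eta ^+ 4)
       / ((1 - eta ^+ 2) * (1 + 2 * xi * NS * eta ^+ 2 * (1 - eta ^+ 2)))).

Definition totalQFI {R : realType} (eta NNS M : R) : R :=
  sup [set M * QFI eta (NNS / M) xi | xi in [set xi : R | 0 <= xi <= 1]].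

From HB Require Import structures.
From mathcomp Require Import all_boot all_order all_algebra.
From mathcomp Require Import all_classical all_reals all_analysis.
From mathcomp Require Import ring lra.
Import Order.TTheory GRing.Theory Num.Theory.
Import numFieldNormedType.Exports.
Local Open Scope classical_set_scope.
Local Open Scope ring_scope.

(* With x = xi N_S the photon number spent on squeezing,
   I(xi; N_S) = 4 N_S ((1 - xi) A(x) + xi B(x)), where A(0) = 1, A(x) <= 1 + C sqrt x and
   B is decreasing.  Hence M I(xi; NNS/M) = 4 NNS ((1 - xi) A(x) + xi B(x)) with
   x = (xi/M) NNS, which a single probe with squeezing fraction xi/M <= xi also
   reaches.  Shifting weight from B(x) to A(x) can only lose when B(x) > A(x), and
   then the value is at most B(x) <= B(0); so I(M) <= max(I(1), 4 NNS B(0)).  As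
   M -> oo, x -> 0 uniformly in xi and I(M) -> 4 NNS max(1, B(0)) >= 4 NNS B(0). *)

Lemma convex_comb_le_max {R : realFieldType} (a b s t : R) :
  0 <= s <= t -> t <= 1 ->
  (1 - t) * a + t * b <= Num.max ((1 - s) * a + s * b) b.
Proof.
move=> /andP[s_ge0 le_st] t_le1; rewrite le_max.
by case: (lerP b a) => [le_ba|lt_ab]; apply/orP; [left|right]; nra.
Qed.

Lemma sqrtr_le_of_sqr {R : rcfType} (a y : R) :
  0 <= y -> a <= y ^+ 2 -> Num.sqrt a <= y.
Proof.
by move=> y_ge0 le_ay; rewrite -(ger0_norm y_ge0) -sqrtr_sqr ler_sqrt ?sqr_ge0.
Qed.

Lemma cvg_divr_pinfty {R : realFieldType} (c : R) : c / M @[M --> +oo] --> 0.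
Proof.
rewrite -(mulr0 c); apply: cvgM; first exact: cvg_cst.
by apply/gtr0_cvgV0; [exists 0; split=> // M | exact: cvg_id].
Qed.

Lemma cvg_le_sup {T : Type} {F : set_system T} {FF : ProperFilter F} {R : realType}
    (f : T -> R) (E : set R) (l : R) :
  has_ubound E -> (\forall x \near F, E (f x)) -> f x @[x --> F] --> l -> l <= sup E.
Proof.
move=> ubE fE; apply: (closed_cvg [set y | y <= sup E]); first exact: closed_le.
by apply: filterS fE => x; exact: ub_le_sup.
Qed.

Section Gains.
Context {R : rcfType}.
Implicit Types x c t : R.

Definition sqrt_excess x := Num.sqrt (x * (1 + x)) - x.

Lemma sqrt_excess_le_half x : 0 <= x -> sqrt_excess x <= 1 / 2.
Proof. by move=> x_ge0; rewrite lerBlDl sqrtr_le_of_sqr //; nra. Qed.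

Lemma sqrt_excess_le_sqrt x : 0 <= x -> sqrt_excess x <= Num.sqrt x.
Proof.
move=> x_ge0; have t_ge0 := sqrtr_ge0 x.
have t_sqr : Num.sqrt x ^+ 2 = x by rewrite sqr_sqrtr.
by rewrite lerBlDl sqrtr_le_of_sqr ?addr_ge0 //; nra.
Qed.

Variable eta : R.
Hypothesis eta01 : 0 < eta < 1.

(* [normalized_qfi x xi] is [I(xi; N_S) / (4 N_S)] in terms of the squeezing photon
   number [x = xi * N_S] (see [QFI_normalized]). *)
Definition disp_gain x := (1 - 2 * eta ^+ 2 * sqrt_excess x)^-1.
Definition sqz_gain x :=
  ((1 - eta ^+ 2) ^+ 2 + eta ^+ 4)
  / ((1 - eta ^+ 2) * (1 + 2 * x * eta ^+ 2 * (1 - eta ^+ 2))).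
Definition normalized_qfi x t := (1 - t) * disp_gain x + t * sqz_gain x.

Definition disp_slope := 2 * eta ^+ 2 / (1 - eta ^+ 2).
Definition sqz_decay := 2 * eta ^+ 2 * (1 - eta ^+ 2).

Definition qfi_limit := Num.max 1 (sqz_gain 0).
Definition qfi_error c := disp_slope * Num.sqrt c + sqz_gain 0 * sqz_decay * c.

Let eta2_gt0 : 0 < eta ^+ 2.
Proof. by rewrite exprn_gt0 //; case/andP: eta01. Qed.
Let eta2_lt1 : eta ^+ 2 < 1.
Proof. by case/andP: eta01 => eta_gt0 eta_lt1; rewrite expr_lt1 ?ltW. Qed.

Let disp_slope_ge0 : 0 <= disp_slope.
Proof.
have e_gt0 := eta2_gt0; have e_lt1 := eta2_lt1.
by rewrite /disp_slope divr_ge0 //; lra.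
Qed.
Let disp_slopeK : disp_slope * (1 - eta ^+ 2) = 2 * eta ^+ 2.
Proof. by rewrite /disp_slope divfK // subr_eq0 gt_eqF. Qed.
Let sqz_decay_ge0 : 0 <= sqz_decay.
Proof.
have e_gt0 := eta2_gt0; have e_lt1 := eta2_lt1.
by rewrite /sqz_decay mulr_ge0 //; lra.
Qed.

Let disp_den_ge x : 0 <= x -> 1 - eta ^+ 2 <= 1 - 2 * eta ^+ 2 * sqrt_excess x.
Proof.
move=> x_ge0; have w_le := sqrt_excess_le_half _ x_ge0.
have e_gt0 := eta2_gt0; nra.
Qed.

Lemma disp_gain_le x : 0 <= x -> disp_gain x <= 1 + disp_slope * Num.sqrt x.
Proof.
move=> x_ge0; have w_le := sqrt_excess_le_sqrt _ x_ge0.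
have den_ge := disp_den_ge _ x_ge0; have e_lt1 := eta2_lt1; have e_gt0 := eta2_gt0.
have slope_t : (1 - eta ^+ 2) * (disp_slope * Num.sqrt x) = 2 * eta ^+ 2 * Num.sqrt x.
  by rewrite mulrA (mulrC _ disp_slope) disp_slopeK.
have den_slope : (1 - eta ^+ 2) * (disp_slope * Num.sqrt x) <=
                 (1 - 2 * eta ^+ 2 * sqrt_excess x) * (disp_slope * Num.sqrt x).
  by apply: ler_wpM2r => //; rewrite mulr_ge0 ?sqrtr_ge0.
rewrite /disp_gain -div1r ler_pdivrMr; nra.
Qed.

Lemma sqz_gain_eq x : 0 <= x -> sqz_gain x = sqz_gain 0 / (1 + sqz_decay * x).
Proof.
move=> x_ge0; have e_lt1 := eta2_lt1.
have bx_ge0 : 0 <= sqz_decay * x by rewrite mulr_ge0.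
rewrite /sqz_gain; rewrite /sqz_decay in bx_ge0 *; field.
by rewrite !gt_eqF //; lra.
Qed.

Lemma sqz_gain0_ge0 : 0 <= sqz_gain 0.
Proof.
have e_gt0 := eta2_gt0; have e_lt1 := eta2_lt1.
have e4 : eta ^+ 4 = (eta ^+ 2) ^+ 2 by rewrite -exprM.
by rewrite /sqz_gain !(mulr0, mul0r, addr0, mulr1) e4 divr_ge0 //; nra.
Qed.

Lemma sqz_gain_le x : 0 <= x -> sqz_gain x <= sqz_gain 0.
Proof.
move=> x_ge0; have bx_ge0 : 0 <= sqz_decay * x by rewrite mulr_ge0.
have B0bx_ge0 : 0 <= sqz_gain 0 * (sqz_decay * x) by rewrite mulr_ge0 ?sqz_gain0_ge0.
by rewrite (sqz_gain_eq _ x_ge0) ler_pdivrMr; nra.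
Qed.

Lemma sqz_gain_ge x : 0 <= x -> sqz_gain 0 - sqz_gain 0 * sqz_decay * x <= sqz_gain x.
Proof.
move=> x_ge0; have bx_ge0 : 0 <= sqz_decay * x by rewrite mulr_ge0.
have B0bx2_ge0 : 0 <= sqz_gain 0 * (sqz_decay * x) ^+ 2.
  by rewrite mulr_ge0 ?sqz_gain0_ge0 ?sqr_ge0.
by rewrite (sqz_gain_eq _ x_ge0) ler_pdivlMr; nra.
Qed.

Lemma normalized_qfi_le_max x s t : 0 <= x -> 0 <= s <= t -> t <= 1 ->
  normalized_qfi x t <= Num.max (normalized_qfi x s) (sqz_gain 0).
Proof.
move=> x_ge0 st t_le1; apply: le_trans (convex_comb_le_max _ _ _ _ st t_le1) _.
by apply: le_max2 => //; exact: sqz_gain_le.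
Qed.

Lemma normalized_qfi_le x c t : 0 <= x <= c -> 0 <= t <= 1 ->
  normalized_qfi x t <= qfi_limit + qfi_error c.
Proof.
move=> /andP[x_ge0 le_xc] /andP[t_ge0 t_le1].
have sqrt_le : disp_slope * Num.sqrt x <= disp_slope * Num.sqrt c.
  by apply: ler_wpM2l => //; rewrite ler_sqrt // (le_trans x_ge0).
have sqrt_ge0 : 0 <= disp_slope * Num.sqrt x by rewrite mulr_ge0 ?sqrtr_ge0.
have err_ge : disp_slope * Num.sqrt c <= qfi_error c.
  by rewrite lerDl (mulr_ge0 (mulr_ge0 sqz_gain0_ge0 sqz_decay_ge0)) // (le_trans x_ge0).
have le1 : 1 <= qfi_limit by rewrite /qfi_limit le_max lexx.
have leB : sqz_gain 0 <= qfi_limit by rewrite /qfi_limit le_max lexx orbT.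
have A_le : disp_gain x <= qfi_limit + qfi_error c.
  by have := disp_gain_le _ x_ge0; lra.
have B_le : sqz_gain x <= qfi_limit + qfi_error c.
  by have := sqz_gain_le _ x_ge0; lra.
have := ler_wpM2l t_ge0 B_le.
have t'_ge0 : 0 <= 1 - t by rewrite subr_ge0.
have := ler_wpM2l t'_ge0 A_le.
rewrite /normalized_qfi; lra.
Qed.

Lemma normalized_qfi00 : normalized_qfi 0 0 = 1.
Proof.
rewrite /normalized_qfi /disp_gain /sqrt_excess.
by rewrite !(mul0r, mulr0, sqrtr0, subr0, invr1, add0r, mul1r, addr0).
Qed.

Lemma normalized_qfi_x1 x : normalized_qfi x 1 = sqz_gain x.
Proof. by rewrite /normalized_qfi subrr mul0r add0r mul1r. Qed.

Lemma qfi_limit_sub_error_le c : 0 <= c ->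
  qfi_limit - qfi_error c <= Num.max 1 (sqz_gain c).
Proof.
move=> c_ge0; have B_ge := sqz_gain_ge _ c_ge0.
have sqrt_ge0 : 0 <= disp_slope * Num.sqrt c by rewrite mulr_ge0 ?sqrtr_ge0.
have B0bc_ge0 : 0 <= sqz_gain 0 * sqz_decay * c.
  exact: mulr_ge0 (mulr_ge0 sqz_gain0_ge0 sqz_decay_ge0) c_ge0.
rewrite /qfi_limit /qfi_error addr_maxl; apply: le_max2; lra.
Qed.

End Gains.

Lemma QFI_normalized {R : realType} (eta NS xi : R) :
  QFI eta NS xi = 4 * NS * normalized_qfi eta (xi * NS) xi.
Proof. by rewrite /QFI /normalized_qfi /disp_gain /sqz_gain /sqrt_excess !mulrA. Qed.

Lemma qfi_error_cvg0 {R : realType} (eta : R) : qfi_error eta c @[c --> 0] --> 0.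
Proof.
suff : qfi_error eta c @[c --> 0] --> qfi_error eta 0.
  by rewrite {2}/qfi_error sqrtr0 !mulr0 addr0.
apply: cvgD; apply: cvgM; try exact: cvg_cst; [exact: sqrt_continuous | exact: cvg_id].
Qed.

Section TotalQFI.
Context {R : realType}.
Variables eta N : R.
Hypotheses (eta01 : 0 < eta < 1) (N_gt0 : 0 < N).

Let qfi_values M := [set M * QFI eta (N / M) xi | xi in [set xi : R | 0 <= xi <= 1]].

Lemma scaled_QFI M xi : 0 < M ->
  M * QFI eta (N / M) xi = 4 * N * normalized_qfi eta (xi * N / M) xi.
Proof.
move=> M_gt0; rewrite QFI_normalized (mulrA xi) [M * _]mulrA.
by congr (_ * _); field; rewrite gt_eqF.
Qed.

Lemma qfi_values_ub M : 0 < M ->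
  ubound (qfi_values M) (4 * N * (qfi_limit eta + qfi_error eta (N / M))).
Proof.
move=> M_gt0 _ [xi /andP[xi_ge0 xi_le1] <-].
have NM_ge0 : 0 <= N / M by rewrite divr_ge0 // ltW.
rewrite scaled_QFI // ler_pM2l ?mulr_gt0 //; apply: normalized_qfi_le => //.
  by rewrite -mulrA mulr_ge0 // ler_piMl.
by rewrite xi_ge0.
Qed.

Lemma le_totalQFI M xi : 0 < M -> 0 <= xi <= 1 ->
  M * QFI eta (N / M) xi <= totalQFI eta N M.
Proof.
move=> M_gt0 xi01; apply: ub_le_sup; last by exists xi.
by eexists; exact: qfi_values_ub.
Qed.

Lemma totalQFI_le M : 0 < M ->
  totalQFI eta N M <= 4 * N * (qfi_limit eta + qfi_error eta (N / M)).
Proof.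
move=> M_gt0; apply: ge_sup; last exact: qfi_values_ub.
by exists (M * QFI eta (N / M) 0), 0; rewrite //= lexx ler01.
Qed.

Lemma totalQFI_ge M : 0 < M ->
  4 * N * (qfi_limit eta - qfi_error eta (N / M)) <= totalQFI eta N M.
Proof.
move=> M_gt0; have N4_gt0 : 0 < 4 * N by rewrite mulr_gt0.
have NM_ge0 : 0 <= N / M by rewrite divr_ge0 // ltW.
apply: le_trans (_ : 4 * N * Num.max 1 (sqz_gain eta (N / M)) <= _).
  by rewrite ler_pM2l //; exact: qfi_limit_sub_error_le.
rewrite (maxr_pMr _ _ (ltW N4_gt0)) ge_max; apply/andP; split.
  have := le_totalQFI M 0 M_gt0; rewrite scaled_QFI // !mul0r normalized_qfi00.
  by rewrite lexx ler01; apply.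
have := le_totalQFI M 1 M_gt0; rewrite scaled_QFI // mul1r normalized_qfi_x1.
by rewrite lexx ler01; apply.
Qed.

Lemma totalQFI_cvg : totalQFI eta N M @[M --> +oo] --> 4 * N * qfi_limit eta.
Proof.
have err_cvg : qfi_error eta (N / M) @[M --> +oo] --> 0.
  exact: cvg_comp (cvg_divr_pinfty N) (qfi_error_cvg0 eta).
have lower : 4 * N * (qfi_limit eta - qfi_error eta (N / M)) @[M --> +oo]
              --> 4 * N * (qfi_limit eta - 0).
  by apply: cvgM; [exact: cvg_cst | apply: cvgB; [exact: cvg_cst | exact: err_cvg]].
have upper : 4 * N * (qfi_limit eta + qfi_error eta (N / M)) @[M --> +oo]
              --> 4 * N * (qfi_limit eta + 0).
  by apply: cvgM; [exact: cvg_cst | apply: cvgD; [exact: cvg_cst | exact: err_cvg]].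
rewrite subr0 in lower; rewrite addr0 in upper.
apply: (squeeze_cvgr _ lower upper); exists 0; split=> // M M_gt0.
by rewrite totalQFI_ge ?totalQFI_le.
Qed.

Lemma totalQFI_le_max M : 1 <= M ->
  totalQFI eta N M <= Num.max (totalQFI eta N 1) (4 * N * sqz_gain eta 0).
Proof.
move=> M_ge1; have M_gt0 : 0 < M := lt_le_trans ltr01 M_ge1.
have N4_ge0 : 0 <= 4 * N by rewrite mulr_ge0 // ltW.
apply: ge_sup; first by exists (M * QFI eta (N / M) 0), 0; rewrite //= lexx ler01.
move=> _ [xi /andP[xi_ge0 xi_le1] <-].
have xiM_ge0 : 0 <= xi / M by rewrite divr_ge0 // ltW.
have xiM_le : xi / M <= xi by rewrite ler_pdivrMr // ler_peMr.
have x_ge0 : 0 <= xi * N / M by rewrite divr_ge0 ?mulr_ge0 // ltW.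
have xiM01 : 0 <= xi / M <= xi by rewrite xiM_ge0.
have := normalized_qfi_le_max _ eta01 _ _ _ x_ge0 xiM01 xi_le1.
rewrite scaled_QFI // => /(ler_wpM2l N4_ge0) /le_trans; apply.
rewrite (maxr_pMr _ _ N4_ge0); apply: le_max2 => //.
(* The same squeezing photon number, reached by one probe with fraction [xi / M]. *)
have -> : xi * N / M = xi / M * N / 1 by rewrite divr1 mulrAC.
rewrite -scaled_QFI //; apply: le_totalQFI => //.
by rewrite xiM_ge0 (le_trans xiM_le).
Qed.

End TotalQFI.

Theorem proposition5 (R : realType) (eta NNS : R) :
  0 < eta < 1 -> 0 < NNS ->
  exists L : R,
    (totalQFI eta NNS M @[M --> +oo] --> L) /\
    sup [set totalQFI eta NNS M | M in [set M : R | 1 <= M]]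
      = Num.max (totalQFI eta NNS 1) L.
Proof.
move=> eta01 N_gt0; have cvgL := totalQFI_cvg _ _ eta01 N_gt0.
exists (4 * NNS * qfi_limit eta); split => //.
set T := [set totalQFI eta NNS M | M in _].
have ubT : ubound T (Num.max (totalQFI eta NNS 1) (4 * NNS * qfi_limit eta)).
  move=> _ [M M_ge1 <-]; apply: le_trans (totalQFI_le_max _ _ eta01 N_gt0 _ M_ge1) _.
  by rewrite le_max2 // ler_pM2l ?mulr_gt0 // le_max lexx orbT.
have hasT : has_ubound T by exists (Num.max (totalQFI eta NNS 1) (4 * NNS * qfi_limit eta)).
apply/le_anti/andP; split.
  by apply: (ge_sup _ ubT); exists (totalQFI eta NNS 1), 1; rewrite //= lexx.
rewrite ge_max; apply/andP; split; first by apply: (ub_le_sup hasT); exists 1; rewrite //= lexx.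
apply: cvg_le_sup hasT _ cvgL; exists 1; split=> // M M_gt1.
by exists M => //; exact: ltW M_gt1.
Qed.
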